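(* Fix a monomial order on $S$. Let $J,E,E'$ be ideals of $S$ and $\mathcal G_J$ a Gröbner basis of $J$, and assume $E$ and $E'$ are S-nice with respect to $\mathcal G_J$. Then $(J+E)\cap(J+E')=J+(E\cap E')$ if and only if $\mathrm{in}((J+E)\cap(J+E'))=\mathrm{in}(J)+\mathrm{in}(E\cap E')$.
   Context: $K$ is a field and $S=K[x_1,\ldots,x_n]$ with a fixed monomial order. For $0\neq f\in S$, $\mathrm{in}(f)$ denotes its leading monomial and $\mathrm{LT}(f)$ its leading term; for an ideal $I$, $\mathrm{in}(I)$ is the ideal generated by the leading monomials of the nonzero elements of $I$. For nonzero $f,g\in S$ the S-polynomial is $S(f,g)=\frac{\mathrm{lcm}(\mathrm{in}(f),\mathrm{in}(g))}{\mathrm{LT}(f)}f-\frac{\mathrm{lcm}(\mathrm{in}(f),\mathrm{in}(g))}{\mathrm{LT}(g)}g$. Given a Gröbner basis $\mathcal G_J$ of an ideal $J$, an ideal $E$ is called S-nice with respect to $\mathcal G_J$ if $S(f,g)\in E$ for all $f\in\mathcal G_J$ and all nonzero $g\in E$. *)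

From HB Require Import structures.
From mathcomp Require Import all_boot all_order all_algebra.
From mathcomp Require Import mpoly.
Set Implicit Arguments. Unset Strict Implicit. Unset Printing Implicit Defensive.
Import GRing.Theory.
Local Open Scope ring_scope.

Section Groebner.
Variables (n : nat) (K : fieldType).
Local Notation S := {mpoly K[n]}.
Local Notation mon := 'X_{1..n}.

(* A monomial order: a total order on monomials, compatible with
   multiplication (addition of exponents), with 1 = 0%MM the least monomial
   (hence a well-order, by Dickson's lemma). *)
Definition monomial_order (le : rel mon) : Prop :=
  [/\ [/\ reflexive le, antisymmetric le, transitive le & total le],
      (forall m1 m2 m3, le m1 m2 -> le (m1 + m3)%MM (m2 + m3)%MM)
    & (forall m, le 0%MM m)].

(* Leading monomial in(f): the le-maximum of the support of f
   (meaningful for f != 0; defaults to an arbitrary value for f = 0). *)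
Definition lmon (le : rel mon) (f : S) : mon :=
  foldr (fun m acc => if le acc m then m else acc) (head 0%MM (msupp f)) (msupp f).

Definition lcoef (le : rel mon) (f : S) : K := f@_(lmon le f).
Definition lterm (le : rel mon) (f : S) : S := lcoef le f *: 'X_[lmon le f].

Definition spoly (le : rel mon) (f g : S) : S :=
  let L := mlcm (lmon le f) (lmon le g) in
  ((lcoef le f)^-1 *: 'X_[L - lmon le f]) * f
  - ((lcoef le g)^-1 *: 'X_[L - lmon le g]) * g.

Definition is_ideal (I : S -> Prop) : Prop :=
  [/\ I 0, (forall a b, I a -> I b -> I (a + b)) & (forall r a, I a -> I (r * a))].

Definition ideal_gen (G : S -> Prop) : S -> Prop := fun p =>
  exists s : seq (S * S), (forall x, x \in s -> G x.2) /\
    p = \sum_(x <- s) x.1 * x.2.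

Definition ideal_sum (I J : S -> Prop) : S -> Prop := fun p =>
  exists a b, I a /\ J b /\ p = a + b.

Definition ideal_cap (I J : S -> Prop) : S -> Prop := fun p => I p /\ J p.

Definition set_eq (I J : S -> Prop) : Prop := forall p, I p <-> J p.

Definition init_ideal (le : rel mon) (I : S -> Prop) : S -> Prop :=
  ideal_gen (fun q => exists f, I f /\ f != 0 /\ q = 'X_[lmon le f]).

Definition groebner_basis (le : rel mon) (G : seq S) (J : S -> Prop) : Prop :=
  [/\ (forall g, g \in G -> J g), (forall g, g \in G -> g != 0)
    & set_eq (init_ideal le J)
             (ideal_gen (fun q => exists2 g, g \in G & q = 'X_[lmon le g]))].

Definition S_nice (le : rel mon) (G : seq S) (E : S -> Prop) : Prop :=
  forall f g, f \in G -> E g -> g != 0 -> E (spoly le f g).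

End Groebner.

From mathcomp Require Import all_boot all_order all_algebra.
From mathcomp Require Import mpoly.
From Stdlib Require Import Classical ClassicalEpsilon.
Set Implicit Arguments. Unset Strict Implicit. Unset Printing Implicit Defensive.
Import GRing.Theory.
Local Open Scope ring_scope.

(* Write A := (J + E) :&: (J + E') and B := J + (E :&: E'); always B <= A.
   1. Dickson's lemma makes the strict monomial order well founded, which
      justifies every descent below.
   2. (init_sum) If F is S-nice w.r.t. G_J then in(J + F) = in(J) + in(F).
      For j + e with j in J, e in F, either a leading term survives, or the
      leading terms cancel; then lm e = lm j lies in in(J), so it is divisible
      by lm f for some f in G_J, and moving a monomial multiple of f from e
      to j keeps e in F (it is a multiple of S(f, e)) and lowers both terms.
   3. (ideal_sub_of_init_sub) If B <= A and in(A) <= in(B), then A = B, by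
      division of elements of A by elements of B.
   Since E :&: E' is S-nice, (2) gives in(B) = in(J) + in(E :&: E'); the
   forward implication is then immediate and the converse is (3). *)

Lemma tail_argmin (u : nat -> nat) (N : nat) :
  exists j, (N <= j)%N /\ forall k, (N <= k)%N -> (u j <= u k)%N.
Proof.
apply: NNPP => no_min.
have descent j : (N <= j)%N -> exists k, (N <= k)%N /\ (u k < u j)%N.
  move=> Nj; apply: NNPP => no_smaller; apply: no_min; exists j; split=> // k Nk.
  by rewrite leqNgt; apply/negP => lt; apply: no_smaller; exists k.
have above v j : (N <= j)%N -> (v <= u j)%N.
  elim: v j => [//|v IHv] j Nj; have [k [Nk lt]] := descent j Nj.
  exact: leq_ltn_trans (IHv k Nk) lt.
by have := above (u N).+1 N (leqnn N); rewrite ltnn.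
Qed.

(* Every sequence of naturals has a nondecreasing subsequence: take the
   successive tail minima. *)
Lemma nondecreasing_subseq (u : nat -> nat) : exists phi : nat -> nat,
  (forall k, (phi k < phi k.+1)%N) /\ (forall k, (u (phi k) <= u (phi k.+1))%N).
Proof.
pose g N := proj1_sig (constructive_indefinite_description _ (tail_argmin u N)).
have gP N : (N <= g N)%N /\ forall k, (N <= k)%N -> (u (g N) <= u k)%N.
  by rewrite /g; case: constructive_indefinite_description.
pose phi := fix phi k := if k is k'.+1 then g (phi k').+1 else g 0.
have phi_incr k : (phi k < phi k.+1)%N by case: (gP (phi k).+1).
exists phi; split=> // k.
have [M [phikE M_le]] : exists M, phi k = g M /\ (M <= phi k)%N.
  by case: k => [|k]; [exists 0 | exists (phi k).+1].
by rewrite phikE; apply: (proj2 (gP M)); apply: leq_trans M_le (ltnW (phi_incr k)).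
Qed.

Section Dickson.
Variable n : nat.

Lemma coordinatewise_subseq (s : nat -> 'X_{1..n}) (l : seq 'I_n) :
  exists phi : nat -> nat, (forall k, (phi k < phi k.+1)%N) /\
    (forall i, i \in l -> forall k, (s (phi k) i <= s (phi k.+1) i)%N).
Proof.
elim: l => [|i l [phi [phi_incr phi_mono]]]; first by exists id.
have [psi [psi_incr psi_mono]] := nondecreasing_subseq (fun k => s (phi k) i).
exists (fun k => phi (psi k)); split=> [k|j].
  by apply: (homo_ltn ltn_trans).
rewrite in_cons => /orP [/eqP -> //|jl] k.
apply: (homo_leq leqnn leq_trans (f := fun k => s (phi k) j)); last exact: ltnW.
exact: phi_mono.
Qed.

Lemma dickson (s : nat -> 'X_{1..n}) : exists i j, (i < j)%N /\ (s i <= s j)%MM.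
Proof.
have [phi [phi_incr phi_mono]] := coordinatewise_subseq s (enum 'I_n).
exists (phi 0), (phi 1); split=> //.
by apply/mnm_lepP => i; apply: phi_mono; rewrite mem_enum.
Qed.

Variable le : rel 'X_{1..n}.
Hypothesis Hle : monomial_order le.

Lemma mo_refl : reflexive le. Proof. by case: Hle => [[]]. Qed.
Lemma mo_anti : antisymmetric le. Proof. by case: Hle => [[]]. Qed.
Lemma mo_trans : transitive le. Proof. by case: Hle => [[]]. Qed.
Lemma mo_total : total le. Proof. by case: Hle => [[]]. Qed.
Lemma mo_addr m1 m2 m3 : le m1 m2 -> le (m1 + m3)%MM (m2 + m3)%MM.
Proof. by case: Hle => _ addr _; apply: addr. Qed.
Lemma mo_ge0 m : le 0%MM m. Proof. by case: Hle. Qed.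

Lemma mo_divides a b : (a <= b)%MM -> le a b.
Proof.
by move=> ab; rewrite -(submK ab); have := mo_addr a (mo_ge0 (b - a)%MM); rewrite add0m addmC.
Qed.

Definition mlt (a b : 'X_{1..n}) : bool := le a b && (a != b).

Lemma mlt_le_trans a b c : mlt a b -> le b c -> mlt a c.
Proof.
case/andP=> ab neq_ab bc; rewrite /mlt (mo_trans ab bc); apply: contraNneq neq_ab => ac.
by apply/eqP/mo_anti; rewrite ab ac.
Qed.

(* By Dickson's lemma, no sequence of monomials decreases strictly forever. *)
Lemma no_infinite_descent (s : nat -> 'X_{1..n}) : ~ (forall k, mlt (s k.+1) (s k)).
Proof.
move=> desc; have [i [j [lt_ij dvd_ij]]] := dickson s.
have ge_ji : le (s j) (s i.+1).
  apply: (homo_leq (r := fun a b => le b a)) => // [x|y x z xy yz|k].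
  - exact: mo_refl.
  - exact: mo_trans yz xy.
  - by case/andP: (desc k).
case/andP: (desc i) => lt_succ; rewrite eqtype.eq_sym => /negP; apply; apply/eqP.
by apply: mo_anti; rewrite lt_succ (mo_trans (mo_divides dvd_ij) ge_ji).
Qed.

Lemma mlt_wf : well_founded mlt.
Proof.
move=> a0; apply: NNPP => not_acc0.
have step x : ~ Acc mlt x -> exists y, mlt y x /\ ~ Acc mlt y.
  move=> not_acc; apply: NNPP => no_y; apply: not_acc; constructor => y lt_yx.
  by apply: NNPP => not_acc_y; apply: no_y; exists y.
pose T := {x | ~ Acc mlt x}.
pose next (t : T) : T :=
  let: exist x hx := t in
  let: exist y hy := constructive_indefinite_description _ (step x hx) in
  exist _ y (proj2 hy).
pose chain := fix chain k := if k is k'.+1 then next (chain k') else exist _ a0 not_acc0 : T.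
apply: (@no_infinite_descent (fun k => proj1_sig (chain k))) => k /=.
by case: (chain k) => x hx /=; case: constructive_indefinite_description => y [].
Qed.

End Dickson.

Section Ideals.
Variables (n : nat) (K : fieldType).
Local Notation S := {mpoly K[n]}.

Lemma coefMX_neq0 (p : S) d k :
  (p * 'X_[d])@_k != 0 -> exists2 m, p@_m != 0 & k = (d + m)%MM.
Proof.
rewrite -mcoeff_msupp (perm_mem (msuppMX p d)) => /mapP [m m_supp ->].
by exists m; rewrite // -mcoeff_msupp.
Qed.

Lemma gen_mem (G : S -> Prop) q : G q -> ideal_gen G q.
Proof.
move=> Gq; exists [:: (1, q)]; split; last by rewrite big_seq1 mul1r.
by move=> x; rewrite inE => /eqP ->.
Qed.

Lemma gen_ideal (G : S -> Prop) : is_ideal (ideal_gen G).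
Proof.
split.
- by exists [::]; rewrite big_nil.
- move=> a b [s1 [G1 ->]] [s2 [G2 ->]]; exists (s1 ++ s2); split; last by rewrite big_cat.
  by move=> x; rewrite mem_cat => /orP [/G1|/G2].
- move=> r a [s [Gs ->]]; exists [seq (r * x.1, x.2) | x <- s]; split.
    by move=> x /mapP [y ys ->]; exact: Gs y ys.
  by rewrite big_map mulr_sumr; apply: eq_bigr => x _; rewrite mulrA.
Qed.

Lemma gen_sub (G I : S -> Prop) : is_ideal I -> (forall q, G q -> I q) ->
  forall p, ideal_gen G p -> I p.
Proof.
move=> [I0 ID IM] GI p [s [Gs ->]]; elim: s Gs => [|x s IHs] Gs; first by rewrite big_nil.
rewrite big_cons; apply: ID; first by apply/IM/GI/Gs; rewrite inE eqxx.
by apply: IHs => y ys; apply: Gs; rewrite inE ys orbT.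
Qed.

Lemma gen_mono (G G' : S -> Prop) : (forall q, G q -> G' q) ->
  forall p, ideal_gen G p -> ideal_gen G' p.
Proof. by move=> GG'; apply: gen_sub; [exact: gen_ideal | move=> q /GG'; apply: gen_mem]. Qed.

Lemma sum_ideal (I J : S -> Prop) : is_ideal I -> is_ideal J -> is_ideal (ideal_sum I J).
Proof.
move=> [I0 ID IM] [J0 JD JM]; split.
- by exists 0, 0; rewrite addr0.
- move=> _ _ [a1 [a2 [Ia1 [Ja2 ->]]]] [b1 [b2 [Ib1 [Jb2 ->]]]].
  by exists (a1 + b1), (a2 + b2); rewrite addrACA; split; [apply: ID | split; [apply: JD |]].
- move=> r _ [a1 [a2 [Ia1 [Ja2 ->]]]]; exists (r * a1), (r * a2).
  by rewrite mulrDr; split; [apply: IM | split; [apply: JM |]].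
Qed.

Lemma cap_ideal (I J : S -> Prop) : is_ideal I -> is_ideal J -> is_ideal (ideal_cap I J).
Proof.
move=> [I0 ID IM] [J0 JD JM]; split=> //.
- by move=> a b [Ia Ja] [Ib Jb]; split; [apply: ID | apply: JD].
- by move=> r a [Ia Ja]; split; [apply: IM | apply: JM].
Qed.

Lemma idealB (I : S -> Prop) a b : is_ideal I -> I a -> I b -> I (a - b).
Proof. by move=> [_ ID IM] Ia Ib; apply: ID => //; rewrite -mulN1r; apply: IM. Qed.

Lemma sum_meml (I J : S -> Prop) a : is_ideal J -> I a -> ideal_sum I J a.
Proof. by case=> J0 _ _ Ia; exists a, 0; rewrite addr0. Qed.

Lemma sum_memr (I J : S -> Prop) b : is_ideal I -> J b -> ideal_sum I J b.
Proof. by case=> I0 _ _ Jb; exists 0, b; rewrite add0r. Qed.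

Lemma sum_sub (I J L : S -> Prop) : is_ideal L ->
  (forall p, I p -> L p) -> (forall p, J p -> L p) -> forall p, ideal_sum I J p -> L p.
Proof. by move=> [_ LD _] IL JL _ [a [b [Ia [Jb ->]]]]; apply: LD; [apply: IL | apply: JL]. Qed.

Lemma sum_coef_neq0 (s : seq (S * S)) mu : (\sum_(x <- s) x.1 * x.2)@_mu != 0 ->
  exists2 x, x \in s & (x.1 * x.2)@_mu != 0.
Proof.
elim: s => [|x s IHs]; first by rewrite big_nil mcoeff0 eqxx.
rewrite big_cons mcoeffD; have [x0|x_nz] := eqVneq ((x.1 * x.2)@_mu) 0.
  by rewrite x0 add0r => /IHs [y ys y_nz]; exists y; rewrite // inE ys orbT.
by exists x; rewrite // inE eqxx.
Qed.

Lemma monomial_ideal_divisor (Q : 'X_{1..n} -> Prop) mu :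
  ideal_gen (fun q : S => exists m, Q m /\ q = 'X_[m]) 'X_[mu] ->
  exists m, Q m /\ (m <= mu)%MM.
Proof.
move=> [s [Qs sE]].
have : (\sum_(x <- s) x.1 * x.2)@_mu != 0 by rewrite -sE mcoeffX eqxx oner_neq0.
case/sum_coef_neq0 => x xs; have [m [Qm ->]] := Qs x xs.
move=> /coefMX_neq0 [m' _ ->].
by exists m; split=> //; apply: lem_addr.
Qed.

End Ideals.

Section LeadingMonomial.
Variables (n : nat) (K : fieldType) (le : rel 'X_{1..n}).
Hypothesis Hle : monomial_order le.
Local Notation S := {mpoly K[n]}.
Local Notation lm := (lmon le).
Local Notation lc := (lcoef le).
Local Notation mlt := (mlt le).
Local Notation mo_refl := (mo_refl Hle).
Local Notation mo_anti := (mo_anti Hle).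
Local Notation mo_trans := (mo_trans Hle).
Local Notation mo_total := (mo_total Hle).
Local Notation mo_addr := (mo_addr Hle).

Definition bounded (f : S) (mu : 'X_{1..n}) : Prop := forall m, f@_m != 0 -> le m mu.

Lemma foldr_max (s : seq 'X_{1..n}) d :
  let r := foldr (fun m acc => if le acc m then m else acc) d s in
  [/\ r \in d :: s, le d r & forall m, m \in s -> le m r].
Proof.
elim: s => [|x s [r_in d_le_r s_le_r]] /=; first by split; rewrite ?mem_seq1 ?mo_refl.
set r := foldr _ _ _ in r_in d_le_r s_le_r *.
case: ifP => [r_le_x|x_lt_r]; split.
- by rewrite !inE eqxx orbT.
- exact: mo_trans d_le_r r_le_x.
- move=> m; rewrite inE => /orP [/eqP -> |/s_le_r m_le_r]; first exact: mo_refl.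
  exact: mo_trans m_le_r r_le_x.
- by move: r_in; rewrite !inE => /orP [->|->]; rewrite ?orbT.
- done.
- move=> m; rewrite inE => /orP [/eqP -> |/s_le_r //].
  by case/orP: (mo_total r x) => //; rewrite x_lt_r.
Qed.

Lemma bounded_lm (f : S) : bounded f (lm f).
Proof.
move=> m; rewrite -mcoeff_msupp; have [_ _] := foldr_max (msupp f) (head 0%MM (msupp f)).
exact.
Qed.

Lemma lm_coef_neq0 (f : S) : f != 0 -> f@_(lm f) != 0.
Proof.
move=> nz; rewrite -mcoeff_msupp /lmon.
have [] := foldr_max (msupp f) (head 0%MM (msupp f)).
case Ef: (msupp f) => [|x s]; first by move/eqP: Ef; rewrite msupp_eq0 (negbTE nz).
by rewrite /= inE => /orP [/eqP ->|//]; rewrite inE eqxx.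
Qed.

Lemma lc_neq0 (f : S) : f != 0 -> lc f != 0.
Proof. exact: lm_coef_neq0. Qed.

Lemma lm_unique (f : S) mu : f@_mu != 0 -> bounded f mu -> lm f = mu.
Proof.
move=> f_mu f_bnd; have nz : f != 0 by apply: contraNneq f_mu => ->; rewrite mcoeff0.
by apply/mo_anti; rewrite (bounded_lm f_mu) (f_bnd _ (lm_coef_neq0 nz)).
Qed.

Lemma bounded0 mu : bounded 0 mu.
Proof. by move=> m; rewrite mcoeff0 eqxx. Qed.

Lemma boundedD (f g : S) mu : bounded f mu -> bounded g mu -> bounded (f + g) mu.
Proof.
move=> bf bg m; rewrite mcoeffD; have [/eqP f0|/bf //] := boolP (f@_m == 0).
by rewrite f0 add0r; apply: bg.
Qed.

Lemma boundedN (f : S) mu : bounded f mu -> bounded (- f) mu.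
Proof. by move=> bf m; rewrite mcoeffN oppr_eq0; apply: bf. Qed.

Lemma bounded_le (f : S) mu nu : bounded f mu -> le mu nu -> bounded f nu.
Proof. by move=> bf mu_nu m /bf m_mu; apply: mo_trans m_mu mu_nu. Qed.

Lemma bounded_lt (f : S) mu m : bounded f mu -> f@_mu = 0 -> f@_m != 0 -> mlt m mu.
Proof. by move=> bf f_mu f_m; rewrite /mlt (bf m f_m); apply: contraNneq f_m => ->; rewrite f_mu. Qed.

Lemma common_bound (a b : S) : exists nu, [/\ bounded a nu, bounded b nu &
  (a != 0 \/ b != 0 -> a@_nu != 0 \/ b@_nu != 0)].
Proof.
have [->|a_nz] := eqVneq a 0.
  exists (lm b); split; [exact: bounded0 | exact: bounded_lm |].
  by case=> [/eqP//|/lm_coef_neq0]; right.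
have [->|b_nz] := eqVneq b 0.
  by exists (lm a); split; [exact: bounded_lm | exact: bounded0 | left; exact: lm_coef_neq0].
case/orP: (mo_total (lm a) (lm b)) => ab.
  by exists (lm b); split; [exact: bounded_le (@bounded_lm a) ab | exact: bounded_lm |
    right; exact: lm_coef_neq0].
by exists (lm a); split; [exact: bounded_lm | exact: bounded_le (@bounded_lm b) ab |
  left; exact: lm_coef_neq0].
Qed.

Lemma lm_add_cases (a b : S) : a != 0 -> b != 0 ->
  [\/ lm (a + b) = lm a, lm (a + b) = lm b | lm a = lm b /\ (a + b)@_(lm b) = 0].
Proof.
have dominant (x y : S) : y != 0 -> le (lm x) (lm y) ->
    lm (x + y) = lm y \/ lm x = lm y /\ (x + y)@_(lm y) = 0.
  move=> y_nz xy; have [sum0|sum_nz] := eqVneq ((x + y)@_(lm y)) 0; last first.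
    by left; apply: lm_unique sum_nz (boundedD (bounded_le (@bounded_lm x) xy) (@bounded_lm y)).
  right; split=> //; apply/mo_anti; rewrite xy bounded_lm //.
  by move: sum0; rewrite mcoeffD => /eqP; rewrite addr_eq0 => /eqP ->; rewrite oppr_eq0 lm_coef_neq0.
move=> a_nz b_nz; case/orP: (mo_total (lm a) (lm b)) => ab.
  by case: (dominant a b b_nz ab) => [|]; [constructor 2 | constructor 3].
case: (dominant b a a_nz ab) => [sumE|[ba sum0]]; first by constructor 1; rewrite addrC.
by constructor 3; rewrite ba addrC.
Qed.

Definition shift_term (b : S) (mu : 'X_{1..n}) (c : K) : S :=
  (c / lc b) *: 'X_[mu - lm b].

Lemma shift_term_spec (b : S) mu (c : K) : b != 0 -> (lm b <= mu)%MM ->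
  (shift_term b mu c * b)@_mu = c /\ bounded (shift_term b mu c * b) mu.
Proof.
move=> b_nz dvd; have muE : mu = (mu - lm b + lm b)%MM by rewrite submK.
rewrite /shift_term -scalerAl (mulrC _ b); split.
  by rewrite mcoeffZ [X in _@_X]muE mcoeffMX -/(lcoef le b) mulfVK ?lc_neq0.
move=> m; rewrite mcoeffZ mulf_eq0 negb_or => /andP [_ /coefMX_neq0 [m' b_m' ->]].
by rewrite [X in le _ X]muE (addmC _ m') (addmC _ (lm b)); apply: mo_addr; apply: bounded_lm b_m'.
Qed.

Lemma spoly_reduction (f g : S) : f != 0 -> g != 0 -> (lm f <= lm g)%MM ->
  g - shift_term f (lm g) (lc g) * f = (- lc g) *: spoly le f g.
Proof.
move=> f_nz g_nz dvd; rewrite /spoly /shift_term.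
have -> : mlcm (lm f) (lm g) = lm g by rewrite mlcmE addmC submK.
have -> : (lm g - lm g)%MM = 0%MM by apply/mnmP => i; rewrite !mnmE subnn.
rewrite mpolyX0 scalerBr -!scalerAl !scalerA mul1r !mulNr divff ?lc_neq0 //.
by rewrite scaleN1r opprK scaleNr addrC.
Qed.

End LeadingMonomial.


Section InitialIdeal.
Variables (n : nat) (K : fieldType) (le : rel 'X_{1..n}).
Hypothesis Hle : monomial_order le.
Local Notation S := {mpoly K[n]}.
Local Notation lm := (lmon le).
Local Notation lc := (lcoef le).

Lemma init_mono (I I' : S -> Prop) : (forall p, I p -> I' p) ->
  forall p, init_ideal le I p -> init_ideal le I' p.
Proof. by move=> II'; apply: gen_mono => q [f [If [f_nz ->]]]; exists f; split; [apply: II' |]. Qed.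

Lemma init_mem (I : S -> Prop) f mu : I f -> f != 0 -> (lm f <= mu)%MM ->
  init_ideal le I 'X_[mu].
Proof.
move=> If f_nz dvd; rewrite -(submK dvd) mpolyXD.
by case: (gen_ideal (fun q : S => exists f, I f /\ f != 0 /\ q = 'X_[lm f])) => _ _ IM;
  apply/IM/gen_mem; exists f.
Qed.

Lemma init_divisor (I : S -> Prop) mu :
  init_ideal le I 'X_[mu] -> exists f, [/\ I f, f != 0 & (lm f <= mu)%MM].
Proof.
move=> in_init.
have [m [[f [If f_nz ->]] dvd]] :
    exists m, (exists f, [/\ I f, f != 0 & m = lm f]) /\ (m <= mu)%MM.
  apply: monomial_ideal_divisor; move: in_init; apply: gen_mono => q [f [If [f_nz ->]]].
  by exists (lm f); split=> //; exists f.
by exists f.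
Qed.

(* If B is contained in A and in(A) in in(B), then A = B: divide an element
   of A by elements of B, whose leading monomials suffice by assumption. *)
Lemma ideal_sub_of_init_sub (A B : S -> Prop) : is_ideal A -> is_ideal B ->
  (forall p, B p -> A p) -> (forall p, init_ideal le A p -> init_ideal le B p) ->
  forall p, A p -> B p.
Proof.
move=> IA IB BA initAB p Ap; have [B0 BD BM] := IB.
move: {2}(lm p) (erefl (lm p)) => mu; elim/(well_founded_ind (mlt_wf Hle)): mu p Ap.
move=> mu IH f Af lm_f; have [->|f_nz] := eqVneq f 0; first exact: B0.
have [b [Bb b_nz dvd]] := init_divisor (initAB _ (init_mem Af f_nz (lepm_refl _))).
have [tb_lm tb_bnd] := shift_term_spec Hle (lc f) b_nz dvd.
set t := shift_term le b (lm f) (lc f) in tb_lm tb_bnd.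
have fE : f = (f - t * b) + t * b by rewrite subrK.
rewrite fE; apply: BD (BM _ _ Bb); have [->|r_nz] := eqVneq (f - t * b) 0; first exact: B0.
apply: IH (lm (f - t * b)) _ _ (idealB IA Af (BA _ (BM _ _ Bb))) erefl.
rewrite -lm_f; apply: bounded_lt (lm_coef_neq0 Hle r_nz).
- exact: boundedD (bounded_lm Hle (f := f)) (boundedN tb_bnd).
- by rewrite mcoeffB tb_lm subrr.
Qed.

End InitialIdeal.

Section InitialIdealOfSum.
Variables (n : nat) (K : fieldType) (le : rel 'X_{1..n}).
Hypothesis Hle : monomial_order le.
Local Notation S := {mpoly K[n]}.
Local Notation lm := (lmon le).
Local Notation lc := (lcoef le).
Variables (J F : S -> Prop) (GJ : seq S).
Hypotheses (IJ : is_ideal J) (IF : is_ideal F).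
Hypotheses (GB : groebner_basis le GJ J) (SN : S_nice le GJ F).

(* When the leading terms of j in J and e in F cancel, j + e can be rewritten
   as j' + e' with j' in J and e' in F strictly below lm e: reduce e by an
   element f of the Groebner basis, which stays in F because the reduction
   is a multiple of S(f, e). *)
Lemma cancel_leading_terms (j e : S) : J j -> F e -> e != 0 -> lm j = lm e ->
  (j + e)@_(lm e) = 0 -> exists j' e', [/\ J j', F e', j' + e' = j + e,
    bounded le j' (lm e) /\ j'@_(lm e) = 0 & bounded le e' (lm e) /\ e'@_(lm e) = 0].
Proof.
move=> Jj Fe e_nz lm_je sum0; have [GJ_J GJ_nz GJ_init] := GB.
have j_nz : j != 0 by apply: contra_eq_neq sum0 => ->; rewrite add0r (lm_coef_neq0 Hle).
have [_ [[f f_GJ ->] dvd]] : exists m, (exists2 f, f \in GJ & m = lm f) /\ (m <= lm e)%MM.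
  apply: monomial_ideal_divisor; rewrite -lm_je.
  have /GJ_init := init_mem Jj j_nz (lepm_refl (lm j)).
  by apply: gen_mono => _ [f f_GJ ->]; exists (lm f); split=> //; exists f.
have f_nz := GJ_nz f f_GJ; have [_ JD JM] := IJ; have [_ _ FM] := IF.
have [tf_lm tf_bnd] := shift_term_spec Hle (lc e) f_nz dvd.
set t := shift_term le f (lm e) (lc e) in tf_lm tf_bnd.
have j_bnd : bounded le j (lm e) by rewrite -lm_je; apply: bounded_lm.
exists (j + t * f), (e - t * f); split.
- by apply: JD => //; apply/JM/GJ_J.
- by rewrite spoly_reduction // -mul_mpolyC; apply/FM/SN.
- by rewrite addrACA subrr addr0.
- by split; [apply: boundedD | rewrite mcoeffD tf_lm -sum0 mcoeffD].
- by split; [apply: boundedD (bounded_lm Hle (f := e)) (boundedN tf_bnd) | rewrite mcoeffB tf_lm subrr].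
Qed.

Lemma sum_lm_divisor_bounded mu (j e : S) : J j -> F e ->
  bounded le j mu -> bounded le e mu -> j + e != 0 ->
  exists x, [/\ J x \/ F x, x != 0 & (lm x <= lm (j + e))%MM].
Proof.
elim/(well_founded_ind (mlt_wf Hle)): mu j e => mu IH j e Jj Fe j_bnd e_bnd sum_nz.
have [j0|j_nz] := eqVneq j 0.
  by exists e; move: sum_nz; rewrite j0 add0r => e_nz; split; [right | | exact: lepm_refl].
have [e0|e_nz] := eqVneq e 0.
  by exists j; move: sum_nz; rewrite e0 addr0 => j_nz'; split; [left | | exact: lepm_refl].
case: (lm_add_cases Hle j_nz e_nz) => [->|->|[lm_je sum0]].
- by exists j; split; [left | | exact: lepm_refl].
- by exists e; split; [right | | exact: lepm_refl].
have [j' [e' [Jj' Fe' sumE [j'_bnd j'0] [e'_bnd e'0]]]] :=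
  cancel_leading_terms Jj Fe e_nz lm_je sum0.
have [nu [j'_nu e'_nu nu_supp]] := common_bound Hle j' e'.
have nz' : j' != 0 \/ e' != 0.
  have [j'_0|] := eqVneq j' 0; [right | by left].
  by apply: contraNneq sum_nz => e'_0; rewrite -sumE j'_0 e'_0 addr0.
have nu_lt : mlt le nu (lm e).
  by have [supp|supp] := nu_supp nz'; [exact: bounded_lt j'_bnd j'0 supp | exact: bounded_lt e'_bnd e'0 supp].
have nu_lt_mu : mlt le nu mu := mlt_le_trans Hle nu_lt (e_bnd _ (lm_coef_neq0 Hle e_nz)).
by rewrite -sumE; apply: (IH nu nu_lt_mu j' e'); rewrite ?sumE.
Qed.

Lemma sum_lm_divisor (h : S) : ideal_sum J F h -> h != 0 ->
  exists x, [/\ J x \/ F x, x != 0 & (lm x <= lm h)%MM].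
Proof.
move=> [j [e [Jj [Fe ->]]]] sum_nz; have [mu [j_bnd e_bnd _]] := common_bound Hle j e.
exact: sum_lm_divisor_bounded j_bnd e_bnd sum_nz.
Qed.

Theorem init_sum : set_eq (init_ideal le (ideal_sum J F))
                          (ideal_sum (init_ideal le J) (init_ideal le F)).
Proof.
have init_sum_ideal : is_ideal (ideal_sum (init_ideal le J) (init_ideal le F)).
  by apply: sum_ideal; apply: gen_ideal.
move=> p; split.
  apply: gen_sub init_sum_ideal _ p => _ [h [Hh [h_nz ->]]].
  have [x [[Jx|Fx] x_nz dvd]] := sum_lm_divisor Hh h_nz.
  - exact: sum_meml (gen_ideal _) (init_mem Jx x_nz dvd).
  - exact: sum_memr (gen_ideal _) (init_mem Fx x_nz dvd).
apply: sum_sub (gen_ideal _) _ _ p; apply: init_mono => q Hq.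
- exact: sum_meml IF Hq.
- exact: sum_memr IJ Hq.
Qed.

End InitialIdealOfSum.

Unset Implicit Arguments.
Set Strict Implicit.

Theorem mainTheorem17 (n : nat) (K : fieldType) (le : rel 'X_{1..n})
  (J E E' : {mpoly K[n]} -> Prop) (GJ : seq {mpoly K[n]}) :
  monomial_order le ->
  is_ideal J -> is_ideal E -> is_ideal E' ->
  groebner_basis le GJ J ->
  S_nice le GJ E -> S_nice le GJ E' ->
  (set_eq (ideal_cap (ideal_sum J E) (ideal_sum J E'))
          (ideal_sum J (ideal_cap E E'))
   <->
   set_eq (init_ideal le (ideal_cap (ideal_sum J E) (ideal_sum J E')))
          (ideal_sum (init_ideal le J) (init_ideal le (ideal_cap E E')))).
Proof.
move=> Hle IJ IE IE' GB SN SN'.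
set A := ideal_cap (ideal_sum J E) (ideal_sum J E').
set B := ideal_sum J (ideal_cap E E').
have IA : is_ideal A by apply: cap_ideal; apply: sum_ideal.
have IB : is_ideal B by apply: sum_ideal => //; apply: cap_ideal.
have BA p : B p -> A p by move=> [a [b [Ja [[Eb E'b] ->]]]]; split; exists a, b.
have SN_cap : S_nice le GJ (ideal_cap E E').
  by move=> f g f_GJ [Eg E'g] g_nz; split; [apply: SN | apply: SN'].
have initB := init_sum Hle IJ (cap_ideal IE IE') GB SN_cap.
split=> [AB | initAB] p.
- split=> [/(init_mono (fun q => proj1 (AB q)))/initB // | /initB].
  exact: init_mono BA p.
- split=> [| /BA //]; apply: (ideal_sub_of_init_sub Hle IA IB BA).
  by move=> q /initAB /initB.
Qed.
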